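(* Let $R=\bigoplus_{\alpha\in\Gamma}R_{\alpha}$ be a graded integral domain, let $T$ be a homogeneous overring of $R$, and let $\star$ (resp. $\star'$) be a semistar operation on $R$ (resp. on $T$). Then $T$ is a homogeneously $(\star,\star')$-linked overring of $R$ if and only if $\mathrm{NA}(R,\star)\subseteq\mathrm{NA}(T,\star')$.
   Context: $\Gamma$ is a commutative cancellative monoid (written additively) whose quotient group $\langle\Gamma\rangle$ is torsion-free. A graded integral domain $R=\bigoplus_{\alpha\in\Gamma}R_\alpha$ is an integral domain that is the direct sum of additive subgroups $R_\alpha$ with $R_\alpha R_\beta\subseteq R_{\alpha+\beta}$. $K$ is its quotient field, $H$ the set of nonzero homogeneous elements, $R_H=\bigoplus_{\alpha\in\langle\Gamma\rangle}(R_H)_\alpha$ the homogeneous quotient field. A homogeneous overring of $R$ is a ring $T$ with $R\subseteq T\subseteq R_H$ and $T=\bigoplus_{\alpha\in\langle\Gamma\rangle}(T\cap(R_H)_\alpha)$; it is a graded integral domain with $T_\alpha=T\cap(R_H)_\alpha$. For a graded domain $S$ (such as $R$ or $T$), $a\in S$, $C_S(a)$ is the ideal of $S$ generated by the homogeneous components of $a$, and for $f=f_0+\cdots+f_nX^n\in S[X]$, $A_f:=\sum_iC_S(f_i)$ (computed in $S$). A semistar operation on $S$ is a map $\star$ from the set of nonzero $S$-submodules of $K$ to itself such that for all $0\ne x\in K$ and $E,F$: $(xE)^\star=xE^\star$; $E\subseteq F\Rightarrow E^\star\subseteq F^\star$; $E\subseteq E^\star$; $(E^\star)^\star=E^\star$.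 $N(\star):=\{f\in S[X]: f\ne0,\ A_f^\star=S^\star\}$ and $\mathrm{NA}(S,\star):=S[X]_{N(\star)}$. $T$ is a homogeneously $(\star,\star')$-linked overring of $R$ if for each nonzero homogeneous finitely generated ideal $F$ of $R$, $F^\star=R^\star$ implies $(FT)^{\star'}=T^{\star'}$. *)

From HB Require Import structures.
From mathcomp Require Import all_boot all_order all_algebra fraction.
Set Implicit Arguments. Unset Strict Implicit. Unset Printing Implicit Defensive.
Import Order.TTheory GRing.Theory Num.Theory.
Local Open Scope ring_scope.

(* Everything lives inside a fixed field K (the quotient field of R).
   Subsets of K are predicates K -> Prop. The grading group G is the
   quotient group <Gamma>, and Gamma is a submonoid of G generating G. *)

Section Defs.
Variables (K : fieldType) (G : zmodType).

Definition subring (S : K -> Prop) : Prop :=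
  S 0 /\ S 1 /\ (forall x y, S x -> S y -> S (x - y)) /\
  (forall x y, S x -> S y -> S (x * y)).

Definition decomp (C : G -> K -> Prop) (x : K) (s : seq G) (f : G -> K) : Prop :=
  uniq s /\ (forall i, i \in s -> C i (f i)) /\ x = \sum_(i <- s) f i.

Definition hcomp (C : G -> K -> Prop) (x y : K) : Prop :=
  exists s f, decomp C x s f /\ exists2 j, j \in s & y = f j.

Definition homog (C : G -> K -> Prop) (x : K) : Prop :=
  x != 0 /\ exists a, C a x.

Definition graded_domain (Gam : G -> Prop) (R : K -> Prop) (Rc : G -> K -> Prop)
  : Prop :=
  [/\ Gam 0, (forall a b, Gam a -> Gam b -> Gam (a + b)),
      (forall g, exists a b, Gam a /\ Gam b /\ g = a - b) &
      (forall (g : G) (n : nat), (0 < n)%N -> g *+ n = 0 -> g = 0)] /\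
  subring R /\
  (forall z, exists a b, R a /\ R b /\ b != 0 /\ z = a / b) /\
  (forall a x, Rc a x -> R x) /\
  (forall a, Rc a 0 /\ forall x y, Rc a x -> Rc a y -> Rc a (x - y)) /\
  (forall a x, ~ Gam a -> Rc a x -> x = 0) /\
  (forall a b x y, Rc a x -> Rc b y -> Rc (a + b) (x * y)) /\
  (forall x, R x -> exists s f, decomp Rc x s f) /\
  (forall s f, decomp Rc 0 s f -> forall i, i \in s -> f i = 0).

Definition RHc (Rc : G -> K -> Prop) (a : G) (z : K) : Prop :=
  exists b c x y, Rc b x /\ Rc c y /\ y != 0 /\ a = b - c /\ z = x / y.

Definition RH (R : K -> Prop) (Rc : G -> K -> Prop) (z : K) : Prop :=
  exists x y, R x /\ homog Rc y /\ z = x / y.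

Definition Tc (Rc : G -> K -> Prop) (T : K -> Prop) (a : G) (z : K) : Prop :=
  T z /\ RHc Rc a z.

Definition homog_overring (R : K -> Prop) (Rc : G -> K -> Prop) (T : K -> Prop)
  : Prop :=
  subring T /\ (forall x, R x -> T x) /\ (forall x, T x -> RH R Rc x) /\
  (forall t, T t -> exists s f, decomp (Tc Rc T) t s f).

Definition gen (S X : K -> Prop) (z : K) : Prop :=
  exists n (r x : 'I_n -> K),
    (forall j, S (r j) /\ X (x j)) /\ z = \sum_(j < n) r j * x j.

Definition submod (S E : K -> Prop) : Prop :=
  E 0 /\ (forall x y, E x -> E y -> E (x + y)) /\
  (forall r x, S r -> E x -> E (r * x)).

Definition nz_submod (S E : K -> Prop) : Prop :=
  submod S E /\ exists x, E x /\ x != 0.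

Definition scale (x : K) (E : K -> Prop) (z : K) : Prop :=
  exists e, E e /\ z = x * e.

Definition subset (E F : K -> Prop) : Prop := forall z, E z -> F z.

(* star is a semistar operation on S (only its values on nonzero
   S-submodules of K are relevant) *)
Definition semistar (S : K -> Prop) (star : (K -> Prop) -> (K -> Prop)) : Prop :=
  forall E, nz_submod S E ->
   [/\ nz_submod S (star E),
       (forall x, x != 0 -> star (scale x E) = scale x (star E)),
       (forall F, nz_submod S F -> subset E F -> subset (star E) (star F)),
       subset E (star E) &
       star (star E) = star E].

Definition Af (S : K -> Prop) (Sc : G -> K -> Prop) (f : {poly K}) : K -> Prop :=
  gen S (fun y => exists i, hcomp Sc f`_i y).

Definition polyin (S : K -> Prop) (f : {poly K}) : Prop := forall i, S f`_i.

Definition Nstar (S : K -> Prop) (Sc : G -> K -> Prop)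
  (star : (K -> Prop) -> (K -> Prop)) (f : {poly K}) : Prop :=
  polyin S f /\ f != 0 /\ star (Af S Sc f) = star S.

Definition NA (S : K -> Prop) (Sc : G -> K -> Prop)
  (star : (K -> Prop) -> (K -> Prop)) (z : {fraction {poly K}}) : Prop :=
  exists g f, polyin S g /\ Nstar S Sc star f /\ z = tofrac g / tofrac f.

Definition is_ideal (S F : K -> Prop) : Prop :=
  (forall x, F x -> S x) /\ submod S F.

Definition nz_homog_fg_ideal (R : K -> Prop) (Rc : G -> K -> Prop) (F : K -> Prop)
  : Prop :=
  is_ideal R F /\ (exists x, F x /\ x != 0) /\
  (forall x y, F x -> hcomp Rc x y -> F y) /\
  (exists s : seq K, F = gen R (fun x => x \in s)).

Definition homog_linked (R : K -> Prop) (Rc : G -> K -> Prop) (T : K -> Prop)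
  (star star' : (K -> Prop) -> (K -> Prop)) : Prop :=
  forall F, nz_homog_fg_ideal R Rc F -> star F = star R ->
    star' (gen T F) = star' T.

End Defs.

From Pilot Require Import Defs.
From mathcomp Require Import all_boot all_algebra fraction.
From mathcomp Require Import ring.
From Stdlib Require Import FunctionalExtensionality PropExtensionality.
Set Implicit Arguments. Unset Strict Implicit. Unset Printing Implicit Defensive.
Import GRing.Theory.
Local Open Scope ring_scope.

(* Homogeneous components in R_H are unique, so if x is a finite sum of
   homogeneous elements of an additive set P, every homogeneous component of
   x, for the grading of R or of T, lies in P.  Hence for f in R[X] the ideal
   A_f computed in T is (A_f)T, and linkedness sends N(star) into N(star').
   Conversely, a homogeneous ideal F generated by a list s is A_f for the
   polynomial f with coefficient list s.  As 1/f lies in NA(R, star), it lies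
   in NA(T, star'), so 1/f = g/h with h = g f in N(star'); then
   A_h <= FT <= T squeezes (FT)^star' between T^star' = (A_h)^star' and
   T^star'. *)

Lemma predext (T : Type) (P Q : T -> Prop) :
  (forall z, P z -> Q z) -> (forall z, Q z -> P z) -> P = Q.
Proof.
move=> PQ QP; apply: functional_extensionality => z.
by apply: propositional_extensionality; split; [exact: PQ | exact: QP].
Qed.

Lemma big_pred1_seq (T : eqType) (V : nmodType) (r : seq T) i (F : T -> V) :
  uniq r -> i \in r -> \sum_(j <- r | j == i) F j = F i.
Proof.
move=> r_uniq ir; rewrite (big_rem i) //= eqxx big1_seq ?addr0 //.
by move=> j /andP[/eqP -> ]; rewrite mem_rem_uniqF.
Qed.

Section Submodules.
Variables (K : fieldType) (S : K -> Prop).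

Lemma submod_sum (E : K -> Prop) (I : Type) (r : seq I) (P : pred I)
    (F : I -> K) :
  submod S E -> (forall i, P i -> E (F i)) -> E (\sum_(i <- r | P i) F i).
Proof. by move=> [E0 [ED _]] EF; apply: (big_ind E E0 ED). Qed.

Lemma gen_min (X E : K -> Prop) :
  submod S E -> (forall x, X x -> E x) -> Defs.subset (gen S X) E.
Proof.
move=> [E0 [ED EM]] XE z [n [r [x [rx ->]]]].
apply: submod_sum => // j _; have [Sr Xx] := rx j; exact: EM (XE _ Xx).
Qed.

Lemma gen_neq0 (X : K -> Prop) z : gen S X z -> z != 0 -> exists x, X x /\ x != 0.
Proof.
move=> [n [r [x [rx ->]]]].
have [/existsP [j xj_neq0] _|] := boolP [exists j, x j != 0].
  by exists (x j); split => //; case: (rx j).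
rewrite negb_exists => /forallP x0; rewrite big1 ?eqxx // => j _.
by move/negPn/eqP: (x0 j) => ->; rewrite mulr0.
Qed.

Lemma gen_mul (X : K -> Prop) r x : S r -> X x -> gen S X (r * x).
Proof. by move=> Sr Xx; exists 1%N, (fun _ => r), (fun _ => x); rewrite big_ord1. Qed.

Lemma gen_ringW (T X : K -> Prop) :
  (forall r, S r -> T r) -> Defs.subset (gen S X) (gen T X).
Proof.
by move=> ST _ [n [r [x [rx ->]]]]; exists n, r, x; split=> // j; case: (rx j) => /ST.
Qed.

Hypothesis S_subring : subring S.

Lemma subringD x y : S x -> S y -> S (x + y).
Proof.
move=> Sx Sy; have [S0 [_ [SB _]]] := S_subring.
by have := SB _ _ Sx (SB _ _ S0 Sy); rewrite sub0r opprK.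
Qed.

Lemma subring_submod : submod S S.
Proof.
by have [S0 [_ [_ SM]]] := S_subring; split=> //; split; [exact: subringD |].
Qed.

Lemma mem_gen (X : K -> Prop) x : X x -> gen S X x.
Proof. by have [_ [S1 _]] := S_subring; move/(gen_mul S1); rewrite mul1r. Qed.

Lemma gen_submod (X : K -> Prop) : submod S (gen S X).
Proof.
have [S0 [_ [_ SM]]] := S_subring.
split; first by exists 0%N, (fun _ => 0), (fun _ => 0); rewrite big_ord0; split=> [[]|].
split=> [_ _ [n1 [r1 [x1 [H1 ->]]]] [n2 [r2 [x2 [H2 ->]]]] |
          r _ Sr [n [r1 [x1 [H1 ->]]]]].
  pose pick (u : 'I_n1 -> K) (v : 'I_n2 -> K) j :=
    match split j with inl a => u a | inr b => v b end.
  exists (n1 + n2)%N, (pick r1 r2), (pick x1 x2).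
  split=> [j|]; first by rewrite /pick; case: (split j) => a; [exact: H1 | exact: H2].
  by rewrite big_split_ord /pick; congr (_ + _); apply: eq_bigr => i _;
    [rewrite (unsplitK (inl i)) | rewrite (unsplitK (inr i))].
exists n, (fun j => r * r1 j), x1; split=> [j|].
  by have [? ?] := H1 j; split => //; apply: SM.
by rewrite mulr_sumr; apply: eq_bigr => i _; rewrite mulrA.
Qed.

Lemma semistar_squeeze (st : (K -> Prop) -> K -> Prop) (E F : K -> Prop) :
  semistar S st -> nz_submod S E -> nz_submod S F ->
  Defs.subset E F -> Defs.subset F S -> st E = st S -> st F = st S.
Proof.
move=> st_semistar E_nz F_nz EF FS stE.
have S_nz : nz_submod S S.
  split; first exact: subring_submod.
  by exists 1; split; [case: S_subring => _ [] | exact: oner_neq0].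
apply: predext => z.
  by have [_ _ st_mono _ _] := st_semistar _ F_nz; exact: st_mono S S_nz FS z.
rewrite -stE; have [_ _ st_mono _ _] := st_semistar _ E_nz.
exact: st_mono _ F_nz EF z.
Qed.

End Submodules.

(* Unlike [decomp], degrees may repeat and the summands only need to
   satisfy [P]. *)
Definition hsum (K : fieldType) (G : zmodType) (C : G -> K -> Prop)
    (P : K -> Prop) (x : K) :=
  exists L : seq (G * K),
    (forall p, p \in L -> C p.1 p.2 /\ P p.2) /\ x = \sum_(p <- L) p.2.

Section Decompositions.
Variables (K : fieldType) (G : zmodType) (C : G -> K -> Prop).

Lemma hcomp_homog x y : hcomp C x y -> exists a, C a y.
Proof. by move=> [s [f [[_ [Cf _]] [j js ->]]]]; exists j; exact: Cf. Qed.

Lemma hcomp_neq0 x s f : decomp C x s f -> x != 0 -> exists y, hcomp C x y /\ y != 0.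
Proof.
move=> D; have [_ [_ Ex]] := D; have [/allP f0|] := boolP (all (fun j => f j == 0) s).
  by rewrite Ex big1_seq ?eqxx // => i /andP[_ /f0 /eqP].
rewrite -has_predC => /hasP[j js /= fj_neq0] _.
by exists (f j); split => //; exists s, f; split => //; exists j.
Qed.

Lemma decomp_by_degree (L : seq (G * K)) :
  (forall a, C a 0) -> (forall a x y, C a x -> C a y -> C a (x + y)) ->
  (forall p, p \in L -> C p.1 p.2) ->
  decomp C (\sum_(p <- L) p.2) (undup (map fst L))
    (fun d => \sum_(p <- L | p.1 == d) p.2).
Proof.
move=> C0 CD CL; split; first exact: undup_uniq.
split=> [d _|].
  rewrite big_seq_cond; apply: (big_ind (C d)); [exact: C0 | exact: CD |].
  by move=> p /andP[pL /eqP <-]; exact: CL.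
rewrite (exchange_big_dep xpredT) //=; apply: eq_big_seq => p pL.
rewrite (eq_bigl (fun d => d == p.1)) => [|d]; last by rewrite eq_sym.
by rewrite big_pred1_seq ?undup_uniq // mem_undup map_f.
Qed.

Variable P : K -> Prop.

Lemma hsum0 : hsum C P 0.
Proof. by exists [::]; rewrite big_nil. Qed.

Lemma hsum_homog a x : C a x -> P x -> hsum C P x.
Proof.
by exists [:: (a, x)]; rewrite big_seq1; split=> // p; rewrite inE => /eqP ->.
Qed.

Lemma hsumD x y : hsum C P x -> hsum C P y -> hsum C P (x + y).
Proof.
move=> [L1 [H1 ->]] [L2 [H2 ->]]; exists (L1 ++ L2); rewrite big_cat.
by split=> // p; rewrite mem_cat => /orP[/H1|/H2].
Qed.

Lemma hsum_sum (I : Type) (r : seq I) (F : I -> K) :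
  (forall i, hsum C P (F i)) -> hsum C P (\sum_(i <- r) F i).
Proof. by move=> HF; apply: big_ind => //; [exact: hsum0 | exact: hsumD]. Qed.

Lemma hsumW (P' : K -> Prop) x :
  (forall u, P u -> P' u) -> hsum C P x -> hsum C P' x.
Proof.
move=> PP' [L [HL ->]]; exists L; split=> // p pL.
by have [? ?] := HL p pL; split; last exact: PP'.
Qed.

Lemma hsumM (Q P' : K -> Prop) x y :
  (forall a b u v, C a u -> C b v -> C (a + b) (u * v)) ->
  (forall u v, P u -> Q v -> P' (u * v)) ->
  hsum C P x -> hsum C Q y -> hsum C P' (x * y).
Proof.
move=> CM PQ [L1 [H1 ->]] [L2 [H2 ->]].
exists [seq (p.1 + q.1, p.2 * q.2) | p <- L1, q <- L2]; split.
  move=> _ /allpairsP[[p q] [/= pL qL ->]] /=.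
  have [Cp Pp] := H1 p pL; have [Cq Qq] := H2 q qL.
  by split; [exact: CM | exact: PQ].
rewrite big_allpairs_dep /= mulr_suml; apply: eq_bigr => p _.
by rewrite mulr_sumr.
Qed.

Lemma decomp_hsum (C' : G -> K -> Prop) x s f :
  (forall a z, C' a z -> C a z) -> (forall i, i \in s -> P (f i)) ->
  decomp C' x s f -> hsum C P x.
Proof.
move=> C'C Pf [_ [C'f ->]]; exists (map (fun i => (i, f i)) s); rewrite big_map.
by split=> // _ /mapP[i iS ->] /=; split; [exact: C'C (C'f i iS) | exact: Pf].
Qed.

End Decompositions.

Lemma hsum_hcomp (K : fieldType) (G : zmodType) (C C' : G -> K -> Prop) x :
  (forall a z, C' a z -> C a z) ->
  (exists s f, decomp C' x s f) -> hsum C (hcomp C' x) x.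
Proof.
move=> C'C [s [f D]]; apply: (decomp_hsum C'C _ D) => i iS.
by exists s, f; split => //; exists i.
Qed.

Lemma polyin_Poly (K : fieldType) (S : K -> Prop) (s : seq K) :
  S 0 -> (forall x, x \in s -> S x) -> polyin S (Poly s).
Proof.
move=> S0 Ss i; rewrite coef_Poly.
by case: (ltnP i (size s)) => [/(mem_nth 0)/Ss | /(nth_default 0) ->].
Qed.

Lemma Poly_neq0 (K : fieldType) (s : seq K) x : x \in s -> x != 0 -> Poly s != 0.
Proof.
by move=> xs; apply: contraNneq => s0; rewrite -(nth_index 0 xs) -coef_Poly s0 coef0.
Qed.

Lemma Af_neq0 (K : fieldType) (G : zmodType) (S : K -> Prop) (Sc : G -> K -> Prop)
    (f : {poly K}) :
  subring S -> f != 0 -> (exists s g, decomp Sc (lead_coef f) s g) ->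
  exists x, Af S Sc f x /\ x != 0.
Proof.
move=> S_subring f_neq0 [s [g D]]; rewrite -lead_coef_eq0 in f_neq0.
have [y [hy y_neq0]] := hcomp_neq0 D f_neq0.
by exists y; split=> //; apply: mem_gen => //; exists (size f).-1.
Qed.

Lemma tofrac_inv_eq_div (K : fieldType) (f g h : {poly K}) :
  f != 0 -> h != 0 -> tofrac 1 / tofrac f = tofrac g / tofrac h -> h = g * f.
Proof.
move=> f_neq0 h_neq0 E.
have Ff_neq0 : tofrac f != 0 by rewrite tofrac_eq0.
have Fh_neq0 : tofrac h != 0 by rewrite tofrac_eq0.
have : tofrac 1 * tofrac h = tofrac g * tofrac f.
  by apply/eqP; rewrite -(eqr_div _ _ Ff_neq0 Fh_neq0) E.
by rewrite tofrac1 mul1r -tofracM => /eqP; rewrite tofrac_eq => /eqP.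
Qed.

Section GradedDomain.
Variables (K : fieldType) (G : zmodType) (Gam : G -> Prop).
Variables (R : K -> Prop) (Rc : G -> K -> Prop).
Hypothesis R_graded : graded_domain Gam R Rc.

Let R_subring : subring R.
Proof. by case: R_graded => _ []. Qed.

Let Rc_R a x : Rc a x -> R x.
Proof. by case: R_graded => _ [_ [_ [RcR _]]]; exact: RcR. Qed.

Let RcB a : Rc a 0 /\ forall x y, Rc a x -> Rc a y -> Rc a (x - y).
Proof. by case: R_graded => _ [_ [_ [_ [RcB _]]]]. Qed.

Let RcM a b x y : Rc a x -> Rc b y -> Rc (a + b) (x * y).
Proof. by case: R_graded => _ [_ [_ [_ [_ [_ [RcM _]]]]]]; exact: RcM. Qed.

Let Rc_decomp x : R x -> exists s f, decomp Rc x s f.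
Proof. by case: R_graded => _ [_ [_ [_ [_ [_ [_ [Rdec _]]]]]]]; exact: Rdec. Qed.

Let Rc_decomp0 s f : decomp Rc 0 s f -> forall i, i \in s -> f i = 0.
Proof. by case: R_graded => _ [_ [_ [_ [_ [_ [_ [_ RcU]]]]]]]; exact: RcU. Qed.

Let Rc_nontrivial : exists e w, Rc e w /\ w != 0.
Proof.
have [_ [R1 _]] := R_subring; have [s [f D]] := Rc_decomp R1.
have [w [/hcomp_homog [e Rw] w_neq0]] := hcomp_neq0 D (oner_neq0 K).
by exists e, w.
Qed.

Lemma Rc_RHc a x : Rc a x -> RHc Rc a x.
Proof.
have [e [w [Rw w_neq0]]] := Rc_nontrivial; move=> Rx.
exists (a + e), e, (x * w), w; split; first exact: RcM.
by do 2!split=> //; rewrite addrK mulfK.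
Qed.

Lemma RHc0 a : RHc Rc a 0.
Proof. by apply: Rc_RHc; case: (RcB a). Qed.

Lemma RHcB a z1 z2 : RHc Rc a z1 -> RHc Rc a z2 -> RHc Rc a (z1 - z2).
Proof.
move=> [b1 [c1 [x1 [y1 [Rx1 [Ry1 [y1_neq0 [-> ->]]]]]]]]
  [b2 [c2 [x2 [y2 [Rx2 [Ry2 [y2_neq0 [E ->]]]]]]]].
exists (b1 + c2), (c1 + c2), (x1 * y2 - x2 * y1), (y1 * y2).
split.
  have [_ RcB'] := RcB (b1 + c2); apply: RcB'; first exact: RcM.
  have -> : b1 + c2 = b2 + c1 by rewrite -[b2](subrK c2) -E addrAC subrK.
  exact: RcM.
split; first exact: RcM.
split; first by rewrite mulf_neq0.
by split; [rewrite opprD addrACA subrr addr0 | field; rewrite y1_neq0 y2_neq0].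
Qed.

Lemma RHcD a z1 z2 : RHc Rc a z1 -> RHc Rc a z2 -> RHc Rc a (z1 + z2).
Proof.
move=> h1 h2; have := RHcB h1 (RHcB (RHc0 a) h2).
by rewrite sub0r opprK.
Qed.

Lemma RHcM a a' z1 z2 : RHc Rc a z1 -> RHc Rc a' z2 -> RHc Rc (a + a') (z1 * z2).
Proof.
move=> [b1 [c1 [x1 [y1 [Rx1 [Ry1 [y1_neq0 [-> ->]]]]]]]]
  [b2 [c2 [x2 [y2 [Rx2 [Ry2 [y2_neq0 [-> ->]]]]]]]].
exists (b1 + b2), (c1 + c2), (x1 * x2), (y1 * y2).
split; first exact: RcM.
split; first exact: RcM.
split; first by rewrite mulf_neq0.
by split; [rewrite opprD addrACA | field; rewrite y1_neq0 y2_neq0].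
Qed.

Lemma RHc_common_denom (s : seq G) (f : G -> K) :
  (forall i, i \in s -> RHc Rc i (f i)) ->
  exists c Y, [/\ Rc c Y, Y != 0 & forall i, i \in s -> Rc (i + c) (f i * Y)].
Proof.
elim: s => [_|i s IH RHf].
  by have [e [w [Rw w_neq0]]] := Rc_nontrivial; exists e, w.
have [|c [Y [RY Y_neq0 RfY]]] := IH.
  by move=> j js; apply: RHf; rewrite in_cons js orbT.
have [b [c' [x [y [Rx [Ry [y_neq0 [Ei Efi]]]]]]]] := RHf i (mem_head _ _).
exists (c + c'), (Y * y); split; [exact: RcM | by rewrite mulf_neq0 |].
move=> k; rewrite in_cons => /orP[/eqP -> | ks]; last first.
  by rewrite mulrA addrA; exact: RcM (RfY k ks) Ry.
rewrite Efi mulrA mulrAC divfK // Ei [c + c']addrC addrA subrK.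
exact: RcM.
Qed.

Lemma RHc_decomp0 s f : decomp (RHc Rc) 0 s f -> forall i, i \in s -> f i = 0.
Proof.
move=> [s_uniq [RHf Ef]] i iS.
have [c [Y [RY Y_neq0 RfY]]] := RHc_common_denom RHf.
have D : decomp Rc 0 (map (fun i => i + c) s) (fun d => f (d - c) * Y).
  split; first by rewrite map_inj_uniq // => ? ?; exact: addIr.
  split=> [_ /mapP[j jS ->]|]; first by rewrite addrK; exact: RfY.
  by rewrite big_map -mulr_suml; under eq_bigr do rewrite addrK; rewrite -Ef mul0r.
have /eqP := Rc_decomp0 D (map_f _ iS).
by rewrite addrK mulf_eq0 (negbTE Y_neq0) orbF => /eqP.
Qed.

(* Uniqueness of homogeneous components in R_H: a component y of x of degree
   j, subtracted from a representation of x as a sum of homogeneous elements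
   of P, leaves a decomposition of 0 whose degree-j part is forced to vanish;
   hence y is the sum of the degree-j summands, which lies in P. *)
Lemma hcomp_hsum (C : G -> K -> Prop) (P : K -> Prop) x y :
  (forall a z, C a z -> RHc Rc a z) -> P 0 -> (forall u v, P u -> P v -> P (u + v)) ->
  hsum (RHc Rc) P x -> hcomp C x y -> P y.
Proof.
move=> C_RHc P0 PD [L [HL ->]] [s [f [[s_uniq [Cf Ef]] [j js ->]]]].
pose L' := L ++ map (fun i => (i, - f i)) s.
have RHcL' : forall p, p \in L' -> RHc Rc p.1 p.2.
  move=> p; rewrite mem_cat => /orP[/HL [] // | /mapP[i iS ->] /=].
  by rewrite -sub0r; apply: RHcB; [exact: RHc0 | exact: C_RHc (Cf i iS)].
have := decomp_by_degree RHc0 RHcD RHcL'.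
rewrite big_cat /= big_map sumrN -Ef subrr => /RHc_decomp0 /(_ j).
rewrite mem_undup map_cat mem_cat -map_comp map_id_in // js orbT => /(_ isT).
rewrite big_cat big_map /= big_pred1_seq // => /eqP; rewrite subr_eq0 => /eqP <-.
rewrite big_seq_cond; apply: (big_ind P P0 PD) => p /andP[/HL [] //].
Qed.

Lemma hcomp_hsum_gen (S X : K -> Prop) (C : G -> K -> Prop) x y :
  subring S -> (forall a z, C a z -> RHc Rc a z) ->
  hsum (RHc Rc) (gen S X) x -> hcomp C x y -> gen S X y.
Proof.
move=> S_subring C_RHc; have [E0 [ED _]] := gen_submod S_subring X.
exact: hcomp_hsum.
Qed.

Lemma hcomp0 y : hcomp Rc 0 y -> y = 0.
Proof.
apply: (hcomp_hsum (P := eq^~ 0)) => //; first exact: Rc_RHc.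
  by move=> u v -> ->; rewrite addr0.
exact: hsum0.
Qed.

Lemma hcomp_R x y : hcomp Rc x y -> R y.
Proof. by case/hcomp_homog=> a /Rc_R. Qed.

Lemma hsum_hcomp_R x : R x -> hsum (RHc Rc) (hcomp Rc x) x.
Proof. by move=> Rx; apply: hsum_hcomp (Rc_decomp Rx); exact: Rc_RHc. Qed.

Lemma gen_homog_hcomp (X : K -> Prop) x y :
  (forall z, X z -> exists a, Rc a z) -> gen R X x -> hcomp Rc x y -> gen R X y.
Proof.
move=> X_homog [n [r [z [rz ->]]]]; apply: hcomp_hsum_gen => //; first exact: Rc_RHc.
apply: hsum_sum => j; have [Rr Xz] := rz j; have [a Rz] := X_homog _ Xz.
apply: (hsumM (P := R) (Q := X)) RHcM _ _ _.
- by move=> u v Ru Xv; exact: gen_mul.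
- by apply: hsumW (hsum_hcomp_R Rr) => u; exact: hcomp_R.
- exact: hsum_homog (Rc_RHc Rz) Xz.
Qed.

Lemma hcomp_fg (xs : seq K) : (forall x, x \in xs -> R x) ->
  exists s : seq K, (forall y, y \in s -> exists2 x, x \in xs & hcomp Rc x y) /\
    (forall x y, x \in xs -> hcomp Rc x y -> gen R (fun z => z \in s) y).
Proof.
elim: xs => [_|x xs IH Rxs]; first by exists [::].
have [|s [s_hcomp s_gen]] := IH.
  by move=> z zs; apply: Rxs; rewrite in_cons zs orbT.
have [sx [h D]] := Rc_decomp (Rxs x (mem_head _ _)).
exists (map h sx ++ s); split=> [y|z y].
  rewrite mem_cat => /orP[/mapP[i isx ->] | ys].
    by exists x; [exact: mem_head | exists sx, h; split=> //; exists i].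
  by have [z zs hz] := s_hcomp y ys; exists z => //; rewrite in_cons zs orbT.
rewrite in_cons => /orP[/eqP -> | zs] hy.
  apply: hcomp_hsum_gen hy => //; first exact: Rc_RHc.
  apply: (decomp_hsum Rc_RHc _ D) => i isx.
  by apply: mem_gen => //; rewrite mem_cat map_f.
apply: gen_min (s_gen z y zs hy) => [|u us]; first exact: gen_submod.
by apply: mem_gen => //; rewrite mem_cat us orbT.
Qed.

Lemma Af_fg (f : {poly K}) :
  polyin R f -> exists s : seq K, Af R Rc f = gen R (fun x => x \in s).
Proof.
move=> Rf; have [|s [s_hcomp s_gen]] := hcomp_fg (xs := f).
  by move=> x xf; rewrite -(nth_index 0 xf); exact: Rf.
exists s; apply: predext; apply: gen_min => [|y]; try exact: gen_submod.
  move=> [i hy]; case: (ltnP i (size f)) => [/(mem_nth 0) fi | /(nth_default 0) fi0].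
    exact: s_gen fi hy.
  rewrite fi0 in hy; rewrite (hcomp0 hy).
  by case: (gen_submod R_subring (fun x => x \in s)).
move=> /s_hcomp [x xf hx]; apply: mem_gen => //.
by exists (index x f); rewrite nth_index.
Qed.

Lemma Af_nz_homog_fg_ideal (f : {poly K}) :
  polyin R f -> f != 0 -> nz_homog_fg_ideal R Rc (Af R Rc f).
Proof.
move=> Rf f_neq0; split; [split | split; [|split]].
- by apply: gen_min => [|y [i /hcomp_R]]; first exact: subring_submod.
- exact: gen_submod.
- exact: Af_neq0 R_subring f_neq0 (Rc_decomp (Rf _)).
- by move=> x y; apply: gen_homog_hcomp => z [i /hcomp_homog].
- exact: Af_fg.
Qed.

Lemma Af_Poly (s : seq K) :
  (forall x, x \in s -> R x) ->
  (forall x y, gen R (fun z => z \in s) x -> hcomp Rc x y ->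
     gen R (fun z => z \in s) y) ->
  Af R Rc (Poly s) = gen R (fun z => z \in s).
Proof.
move=> Rs s_homog; have F_submod := gen_submod R_subring (fun z => z \in s).
apply: predext.
  apply: gen_min => // y [i hy]; apply: s_homog hy.
  by apply: polyin_Poly => [|x xs]; [case: F_submod | exact: mem_gen].
apply: gen_min => [|x xs]; first exact: gen_submod.
have [L [HL ->]] := hsum_hcomp_R (Rs x xs).
rewrite big_seq; apply: submod_sum => [|p pL]; first exact: gen_submod.
apply: mem_gen => //; exists (index x s).
by rewrite coef_Poly nth_index //; case: (HL p pL).
Qed.

Section HomogeneousOverring.
Variable T : K -> Prop.
Hypothesis T_overring : homog_overring R Rc T.

Let T_subring : subring T.
Proof. by case: T_overring. Qed.

Let R_T x : R x -> T x.
Proof. by case: T_overring => _ [RT _]; exact: RT. Qed.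

Let Tc_decomp t : T t -> exists s f, decomp (Tc Rc T) t s f.
Proof. by case: T_overring => _ [_ [_ Tdec]]; exact: Tdec. Qed.

Let Tc_RHc a z : Tc Rc T a z -> RHc Rc a z.
Proof. by case. Qed.

Lemma hcomp_T x y : hcomp (Tc Rc T) x y -> T y.
Proof. by case/hcomp_homog => a []. Qed.

Lemma hcomp_Rc_Tc x y : hcomp Rc x y -> hcomp (Tc Rc T) x y.
Proof.
move=> [s [f [[s_uniq [Rcf Ex]] hy]]]; exists s, f; split=> //; split=> //.
split=> // i /Rcf Rcfi; split; [exact/R_T/(Rc_R Rcfi) | exact: Rc_RHc].
Qed.

Lemma hsum_hcomp_T t : T t -> hsum (RHc Rc) (hcomp (Tc Rc T) t) t.
Proof. by move=> Tt; apply: hsum_hcomp (Tc_decomp Tt). Qed.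

Lemma Af_overring (f : {poly K}) :
  polyin R f -> Af T (Tc Rc T) f = gen T (Af R Rc f).
Proof.
move=> Rf; apply: predext.
  apply: gen_min => [|y [i hy]]; first exact: gen_submod.
  apply: hcomp_hsum_gen hy => //; apply: hsumW (hsum_hcomp_R (Rf i)) => u hu.
  by do 2!apply: mem_gen => //; exists i.
apply: gen_min => [|x /(gen_ringW R_T)]; first exact: gen_submod.
apply: gen_min => [|y [i hy]]; first exact: gen_submod.
by apply: mem_gen => //; exists i; exact: hcomp_Rc_Tc.
Qed.

Lemma Af_mul_sub (g f : {poly K}) : polyin T g -> polyin R f ->
  Defs.subset (Af T (Tc Rc T) (g * f)) (gen T (Af R Rc f)).
Proof.
move=> Tg Rf; apply: gen_min => [|y [k hy]]; first exact: gen_submod.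
apply: hcomp_hsum_gen hy => //; rewrite coefM; apply: hsum_sum => j.
apply: (hsumM (P := T) (Q := Af R Rc f)) RHcM _ _ _.
- by move=> u v Tu Av; exact: gen_mul.
- by apply: hsumW (hsum_hcomp_T (Tg j)) => u; exact: hcomp_T.
- by apply: hsumW (hsum_hcomp_R (Rf _)) => u hu; apply: mem_gen => //; exists (k - j)%N.
Qed.

Lemma linked_NA_sub star star' : homog_linked R Rc T star star' ->
  forall z, NA R Rc star z -> NA T (Tc Rc T) star' z.
Proof.
move=> linked z [g [f [Rg [[Rf [f_neq0 starf]] ->]]]].
exists g, f; split=> [i|]; first exact: R_T.
split=> //; split=> [i|]; first exact: R_T.
split=> //; rewrite Af_overring //; apply: linked => //.
exact: Af_nz_homog_fg_ideal.
Qed.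

Lemma NA_sub_linked star star' : semistar T star' ->
  (forall z, NA R Rc star z -> NA T (Tc Rc T) star' z) ->
  homog_linked R Rc T star star'.
Proof.
move=> star'_semistar NA_sub F [[F_R _] [[x0 [Fx0 x0_neq0]] [F_homog [s Fs]]]] starF.
subst F; have Rs x : x \in s -> R x by move=> xs; apply/F_R/mem_gen.
have Af_f := Af_Poly Rs F_homog.
have [x [xs x_neq0]] := gen_neq0 Fx0 x0_neq0.
have f_neq0 := Poly_neq0 xs x_neq0.
have [R0 [R1 _]] := R_subring.
have [g [h [Tg [[Th [h_neq0 star'h]] E]]]] :
    NA T (Tc Rc T) star' (tofrac 1 / tofrac (Poly s)).
  apply: NA_sub; exists 1, (Poly s); split=> [i|].
    by rewrite coef1; case: (i == 0%N).
  by split=> //; split; [exact: polyin_Poly | rewrite Af_f].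
have Eh := tofrac_inv_eq_div f_neq0 h_neq0 E; subst h.
apply: (semistar_squeeze T_subring star'_semistar _ _ _ _ star'h).
- by split; [exact: gen_submod | exact: Af_neq0 T_subring h_neq0 (Tc_decomp (Th _))].
- by split; [exact: gen_submod | exists x0; split=> //; exact: mem_gen].
- by rewrite -Af_f; apply: Af_mul_sub => //; exact: polyin_Poly.
- by apply: gen_min => [|y /F_R /R_T //]; exact: subring_submod.
Qed.

End HomogeneousOverring.

End GradedDomain.

Theorem lemma2p8 (K : fieldType) (G : zmodType) (Gam : G -> Prop)
  (R : K -> Prop) (Rc : G -> K -> Prop) (T : K -> Prop)
  (star star' : (K -> Prop) -> (K -> Prop)) :
  graded_domain Gam R Rc ->
  homog_overring R Rc T ->
  semistar R star ->
  semistar T star' ->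
  (homog_linked R Rc T star star' <->
   (forall z, NA R Rc star z -> NA T (Tc Rc T) star' z)).
Proof.
(* The semistar axioms are only used for star', through its monotonicity. *)
move=> R_graded T_overring _ star'_semistar.
split; first exact: (linked_NA_sub R_graded T_overring).
exact: (NA_sub_linked R_graded T_overring star'_semistar).
Qed.
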